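(* Let $k=0$ and let $a$ be a regular scale factor which is an even function on $\mathbb R$, such that either $\infty>\dot a(0^+)>0$, or $\dot a(0)=0$ but the $n$th derivative $a^{(n)}(0)\ne0$ for some $n$. Then $g_{\theta\theta}(\tau,\rho)$ and $g_{\phi\phi}(\tau,\rho,\theta)$ are continuous on $D_{\mathrm{polar}}$ (with values at $\rho=\rho_{\mathcal M_\tau}$ defined as limits as $t_0\to0$) and vanish at $(\tau,\rho_{\mathcal M_\tau})$ for every $\tau>0$.
   Context: A function $a:[0,\infty)\to[0,\infty)$ is a regular scale factor if: (a) $a(0)=0$; (b) $a$ is increasing and continuous on $[0,\infty)$, twice continuously differentiable on $(0,\infty)$, with an inverse function on $[0,\infty)$; (c) $\frac{a(t)\ddot a(t)}{\dot a(t)^2}\le1$ for all $t>0$ (presupposing $\dot a(t)\ne0$). Here $a$ is regarded on $\mathbb R$ via $a(-t)=a(t)$; $\dot a(0^+)=\lim_{t\to0^+}\dot a(t)$. For $0<s<\tau$, $\chi_s(\tau)=\int_s^\tau\frac{1}{a(t)}\frac{a(\tau)}{\sqrt{a^2(\tau)-a^2(t)}}dt$. For $\tau>0$, $\rho_{\mathcal M_\tau}=\int_0^\tau\frac{a(t)}{\sqrt{a^2(\tau)-a^2(t)}}dt$; for $0<\rho<2\rho_{\mathcal M_\tau}$, $t_0(\tau,\rho)$ is the unique $t_0\in(-\tau,\tau)$ with $\rho=\int_{t_0}^\tau\frac{a(t)}{\sqrt{a^2(\tau)-a^2(t)}}dt$. Define $f(\tau,t_0)=\int_{t_0}^{\tau}\frac{\ddot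 a(t)}{\dot a(t)^2}\left(\frac{\sqrt{a^2(\tau)-a^2(t_0)}}{\sqrt{a^2(\tau)-a^2(t)}}-1\right)dt$ for $0\le t_0<\tau$, $f(\tau,t_0)=2f(\tau,0)-f(\tau,-t_0)$ for $-\tau<t_0<0$, and $g_{\tau\tau}(\tau,\rho)=-[1-\dot a(\tau)f(\tau,t_0(\tau,\rho))]^2$. Let $\rho_{\max}(\tau)=\inf\{\rho\in(0,2\rho_{\mathcal M_\tau}):g_{\tau\tau}(\tau,\rho)=0\}$ if nonempty, else $2\rho_{\mathcal M_\tau}$. $D_{\mathrm{polar}}=\{(\tau,\rho,\theta,\phi):\tau>0,\ 0<\rho<\rho_{\max}(\tau),\ \theta\in I_\pi,\ \phi\in I_{2\pi}\}$ with $I_\pi,I_{2\pi}$ open intervals of lengths $\pi,2\pi$. For $t_0=t_0(\tau,\rho)\ne0$: $g_{\theta\theta}(\tau,\rho)=a^2(t_0)\chi_{|t_0|}(\tau)^2$ and $g_{\phi\phi}(\tau,\rho,\theta)=g_{\theta\theta}(\tau,\rho)\sin^2\theta$. *)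

From Stdlib Require Import Reals ClassicalEpsilon.
From Coquelicot Require Import Coquelicot.
Open Scope R_scope.

Definition ad (a : R -> R) : R -> R := Derive a.
Definition add (a : R -> R) : R -> R := Derive (Derive a).

Definition regular_scale_factor (a : R -> R) : Prop :=
  a 0 = 0 /\
  (forall t, 0 <= t -> 0 <= a t) /\
  (forall x y, 0 <= x -> x < y -> a x < a y) /\
  (forall t, 0 <= t -> filterlim a (within (fun x => 0 <= x) (locally t)) (locally (a t))) /\
  (forall t, 0 < t -> ex_derive a t /\ ex_derive (Derive a) t /\ continuous (Derive (Derive a)) t) /\
  (forall y, 0 <= y -> exists x, 0 <= x /\ a x = y) /\
  (forall t, 0 < t -> ad a t <> 0 /\ a t * add a t / (ad a t ^ 2) <= 1).

Definition even_fun (a : R -> R) : Prop := forall t, a (- t) = a t.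

Definition imp_int (f : R -> R) (l u : R) : R := RInt_gen f (at_right l) (at_left u).

Definition chi (a : R -> R) (s tau : R) : R :=
  imp_int (fun t => / a t * (a tau / sqrt (a tau ^ 2 - a t ^ 2))) s tau.

Definition rho_of (a : R -> R) (tau t0 : R) : R :=
  imp_int (fun t => a t / sqrt (a tau ^ 2 - a t ^ 2)) t0 tau.

Definition rhoM (a : R -> R) (tau : R) : R := rho_of a tau 0.

Definition t0f (a : R -> R) (tau rho : R) : R :=
  epsilon (inhabits 0) (fun t0 => - tau < t0 < tau /\ rho = rho_of a tau t0).

Definition f_pos (a : R -> R) (tau t0 : R) : R :=
  imp_int (fun t => add a t / (ad a t ^ 2) *
     (sqrt (a tau ^ 2 - a t0 ^ 2) / sqrt (a tau ^ 2 - a t ^ 2) - 1)) t0 tau.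

Definition f_fun (a : R -> R) (tau t0 : R) : R :=
  if Rle_dec 0 t0 then f_pos a tau t0 else 2 * f_pos a tau 0 - f_pos a tau (- t0).

Definition g_tautau (a : R -> R) (tau rho : R) : R :=
  - (1 - ad a tau * f_fun a tau (t0f a tau rho)) ^ 2.

(* rho_max(tau): infimum of zeros of g_tautau in (0, 2 rhoM), else 2 rhoM
   (Glb_Rbar of the empty set is p_infty) *)
Definition rho_max (a : R -> R) (tau : R) : R :=
  match Glb_Rbar (fun rho => 0 < rho < 2 * rhoM a tau /\ g_tautau a tau rho = 0) with
  | Finite x => x
  | _ => 2 * rhoM a tau
  end.

(* D_polar, with I_pi = (c1, c1 + PI), I_2pi = (c2, c2 + 2 PI);
   points are (((tau, rho), theta), phi) *)
Definition D_polar (a : R -> R) (c1 c2 : R) (p : R * R * R * R) : Prop :=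
  let '(tau, rho, theta, phi) := p in
  0 < tau /\ 0 < rho < rho_max a tau /\ c1 < theta < c1 + PI /\ c2 < phi < c2 + 2 * PI.

Definition gthth_t0 (a : R -> R) (tau t0 : R) : R :=
  a t0 ^ 2 * chi a (Rabs t0) tau ^ 2.

(* g_thetatheta, with the value at t0 = 0 (i.e. rho = rhoM) defined as the limit t0 -> 0 *)
Definition g_thth (a : R -> R) (tau rho : R) : R :=
  let t0 := t0f a tau rho in
  if Req_EM_T t0 0 then real (Lim (gthth_t0 a tau) 0) else gthth_t0 a tau t0.

Definition g_phph (a : R -> R) (tau rho theta : R) : R :=
  g_thth a tau rho * sin theta ^ 2.

(* Substituting t = tau - s^2 turns the singular integrals defining rho(tau, t0) and
   chi_s(tau) into proper integrals over [0, sqrt (tau - t0)] of integrands that are jointly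
   continuous in (tau, s), so both depend continuously on their parameters.  Since a is even
   and increasing, t0 |-> rho(tau, t0) is strictly decreasing with
   rho(tau, -t) = 2 rho_M(tau) - rho(tau, t); hence t0(tau, rho) is well defined and continuous,
   and g_thth = a(t0)^2 chi_{|t0|}(tau)^2 is continuous wherever t0 <> 0.  At t0 = 0 the
   integral chi_{|t0|}(tau) diverges, but cutting it at s = sqrt (tau - delta) gives
   a(t0) chi_{|t0|}(tau) <= a(t0) chi_delta(tau) + a(tau) M sqrt delta, with M a bound for the
   substitution kernel; letting t0 -> 0 and then delta -> 0 shows that a(t0) chi_{|t0|}(tau)
   tends to 0 uniformly for tau near a given point, which is the value of g_thth at rho_M. *)

From Stdlib Require Import Reals Lra ClassicalEpsilon FunctionalExtensionality.
From Coquelicot Require Import Coquelicot.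
Open Scope R_scope.

Lemma ball_Rabs (x e y : R) : ball x e y <-> Rabs (y - x) < e.
Proof. reflexivity. Qed.

Lemma continuity_2d_pt_continuous_r (G : R -> R -> R) x y :
  continuity_2d_pt G x y -> continuous (G x) y.
Proof.
  intros HG. apply filterlim_locally. intros eps.
  destruct (HG eps) as [d Hd]. exists d. intros v Hv. apply Hd; [|exact Hv].
  rewrite Rminus_eq_0, Rabs_R0. apply cond_pos.
Qed.

Lemma continuity_2d_pt_comp (f : R -> R) (G : R -> R -> R) x y :
  continuous f (G x y) -> continuity_2d_pt G x y ->
  continuity_2d_pt (fun u v => f (G u v)) x y.
Proof. intros Hf HG. apply continuity_1d_2d_pt_comp; [apply continuity_pt_filterlim|]; assumption. Qed.

Lemma continuity_2d_pt_comp_2 (P f g : R -> R -> R) x y :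
  continuity_2d_pt P (f x y) (g x y) -> continuity_2d_pt f x y -> continuity_2d_pt g x y ->
  continuity_2d_pt (fun u v => P (f u v) (g u v)) x y.
Proof.
  rewrite !continuity_2d_pt_filterlim. intros HP Hf Hg.
  exact (continuous_comp_2 (fun z : R * R => f (fst z) (snd z))
           (fun z : R * R => g (fst z) (snd z)) P (x, y) Hf Hg HP).
Qed.

Lemma continuity_2d_pt_minus_sqr x y : continuity_2d_pt (fun u v => u - v * v) x y.
Proof.
  apply continuity_2d_pt_minus; [apply continuity_2d_pt_id1|].
  apply continuity_2d_pt_mult; apply continuity_2d_pt_id2.
Qed.

Definition continuity_2d_pt_on (P : R -> R -> Prop) (f : R -> R -> R) (x y : R) : Prop :=
  forall eps : posreal, locally_2d (fun u v => P u v -> Rabs (f u v - f x y) < eps) x y.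

Lemma continuity_2d_pt_on_comp (P : R -> R -> Prop) (F T : R -> R -> R) x y :
  continuity_2d_pt F x (T x y) -> continuity_2d_pt_on P T x y ->
  continuity_2d_pt_on P (fun u v => F u (T u v)) x y.
Proof.
  intros HF HT eps. destruct (HF eps) as [d1 H1]. destruct (HT d1) as [d2 H2].
  assert (Hd : 0 < Rmin d1 d2) by (apply Rmin_pos; apply cond_pos).
  exists (mkposreal _ Hd). simpl. intros u v Hu Hv HP.
  generalize (Rmin_l d1 d2) (Rmin_r d1 d2). intros. apply H1; [lra | apply H2; auto; lra].
Qed.

Lemma continuity_2d_pt_on_ext (P : R -> R -> Prop) (f g : R -> R -> R) x y :
  (forall u v, P u v -> f u v = g u v) -> P x y ->
  continuity_2d_pt_on P f x y -> continuity_2d_pt_on P g x y.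
Proof.
  intros Hfg Hxy Hf eps. destruct (Hf eps) as [d Hd]. exists d. intros u v Hu Hv Huv.
  rewrite <- !Hfg by assumption. apply Hd; assumption.
Qed.

Lemma continuous_sqrt_minus (c x : R) : continuous (fun y => sqrt (c - y)) x.
Proof.
  apply continuous_sqrt_comp.
  apply (continuous_minus (fun _ => c) (fun y => y)); [apply continuous_const | apply continuous_id].
Qed.

Lemma sqrt_minus_sqrt_le x y : 0 <= y <= x -> sqrt x - sqrt y <= sqrt (x - y).
Proof.
  intros Hyx.
  assert (Hs : sqrt x <= sqrt y + sqrt (x - y)).
  { generalize (sqrt_pos y) (sqrt_pos (x - y)); intros Hy Hxy.
    rewrite <- (sqrt_square (sqrt y + sqrt (x - y))) by lra.
    apply sqrt_le_1_alt.
    generalize (sqrt_sqrt y (proj1 Hyx)) (sqrt_sqrt (x - y) ltac:(lra)); nra. }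
  lra.
Qed.

Lemma mul_div_lt_half x e : 0 <= x -> 0 < e -> x * (e / (2 * (x + 1))) < e / 2.
Proof.
  intros Hx He. assert (Hq : 0 < e / (2 * (x + 1))) by (apply Rdiv_lt_0_compat; lra).
  replace (x * (e / (2 * (x + 1)))) with (e / 2 - e / (2 * (x + 1))) by (field; lra). lra.
Qed.

Lemma continuous_segment_bounded (f : R -> R) lo hi : lo <= hi ->
  (forall x, lo <= x <= hi -> continuous f x) ->
  exists M, 0 <= M /\ forall x, lo <= x <= hi -> Rabs (f x) <= M.
Proof.
  intros Hlh Hc.
  destruct (continuity_ab_maj (fun x => Rabs (f x)) lo hi Hlh) as [m [Hm _]].
  { intros x Hx. apply continuity_pt_filterlim, continuous_Rabs_comp, Hc, Hx. }
  exists (Rabs (f m)). split; [apply Rabs_pos | exact Hm].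
Qed.

Lemma ex_RInt_segment (f : R -> R) lo hi u v :
  (forall x, lo <= x <= hi -> continuous f x) -> lo <= u <= hi -> lo <= v <= hi ->
  ex_RInt f u v.
Proof.
  intros Hc Hu Hv. apply (ex_RInt_continuous (V := R_CompleteNormedModule)).
  intros x Hx. apply Hc. unfold Rmin, Rmax in Hx. destruct (Rle_dec u v); lra.
Qed.

Lemma abs_RInt_le (f : R -> R) u v M :
  (forall x, Rmin u v <= x <= Rmax u v -> continuous f x) ->
  (forall x, Rmin u v <= x <= Rmax u v -> Rabs (f x) <= M) ->
  Rabs (RInt f u v) <= M * Rabs (v - u).
Proof.
  intros Hc Hb. destruct (Rle_or_lt u v) as [Huv | Hvu].
  - rewrite Rmin_left, Rmax_right in * by lra.
    rewrite (Rabs_pos_eq (v - u)), Rmult_comm by lra.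
    apply abs_RInt_le_const; auto. apply (ex_RInt_segment f u v); auto; lra.
  - rewrite Rmin_right, Rmax_left in * by lra.
    rewrite <- opp_RInt_swap by (apply (ex_RInt_segment f v u); auto; lra).
    change (Rabs (- RInt f v u) <= M * Rabs (v - u)).
    rewrite Rabs_Ropp, Rabs_minus_sym, (Rabs_pos_eq (u - v)), Rmult_comm by lra.
    apply abs_RInt_le_const; [lra | | auto]. apply (ex_RInt_segment f v u); auto; lra.
Qed.

Lemma abs_RInt_minus_le (f g : R -> R) u v e :
  (forall x, Rmin u v <= x <= Rmax u v -> continuous f x /\ continuous g x) ->
  (forall x, Rmin u v <= x <= Rmax u v -> Rabs (f x - g x) <= e) ->
  Rabs (RInt f u v - RInt g u v) <= e * Rabs (v - u).
Proof.
  intros Hc Hb.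
  rewrite <- (RInt_minus (V := R_CompleteNormedModule)) by
    (apply (ex_RInt_continuous (V := R_CompleteNormedModule)); intros x Hx; apply Hc, Hx).
  apply abs_RInt_le; [|exact Hb].
  intros x Hx. apply (continuous_minus f g); apply Hc, Hx.
Qed.

Lemma RInt_minus_lower (f : R -> R) lo hi c z z' :
  (forall x, lo <= x <= hi -> continuous f x) ->
  lo <= c <= hi -> lo <= z <= hi -> lo <= z' <= hi ->
  RInt f c z - RInt f c z' = RInt f z' z.
Proof.
  intros Hf Hc Hz Hz'. rewrite <- (RInt_Chasles f c z' z).
  - change (RInt f c z' + RInt f z' z - RInt f c z' = RInt f z' z). ring.
  - apply (ex_RInt_segment f lo hi); auto.
  - apply (ex_RInt_segment f lo hi); auto.
Qed.

Lemma RInt_lipschitz (f : R -> R) lo hi c M :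
  (forall x, lo <= x <= hi -> continuous f x) -> (forall x, lo <= x <= hi -> Rabs (f x) <= M) ->
  lo <= c <= hi -> forall z z', lo <= z <= hi -> lo <= z' <= hi ->
  Rabs (RInt f c z - RInt f c z') <= M * Rabs (z - z').
Proof.
  intros Hf Hb Hc z z' Hz Hz'. rewrite (RInt_minus_lower f lo hi) by auto.
  assert (Hin : forall x, Rmin z' z <= x <= Rmax z' z -> lo <= x <= hi)
    by (intros x Hx; unfold Rmin, Rmax in Hx; destruct (Rle_dec z' z); lra).
  apply abs_RInt_le; auto.
Qed.

Lemma RInt_even (f : R -> R) t : (forall x, f (- x) = f x) -> ex_RInt f 0 t ->
  RInt f (- t) 0 = RInt f 0 t.
Proof.
  intros Hf Hex.
  assert (H := is_RInt_comp_lin (V := R_NormedModule) f (-1) 0 0 (- t) (RInt f 0 t)).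
  replace (-1 * 0 + 0) with 0 in H by ring. replace (-1 * - t + 0) with t in H by ring.
  specialize (H (RInt_correct (V := R_CompleteNormedModule) _ _ _ Hex)).
  apply (is_RInt_swap (V := R_NormedModule)) in H.
  apply is_RInt_unique.
  apply (is_RInt_ext (fun y => opp (scal (-1) (f (-1 * y + 0))))).
  - intros x _. change (- (-1 * f (-1 * x + 0)) = f x).
    replace (-1 * x + 0) with (- x) by ring. rewrite Hf. ring.
  - replace (RInt f 0 t) with (opp (opp (RInt f 0 t))) by apply opp_opp.
    apply (is_RInt_opp (V := R_NormedModule)). exact H.
Qed.

Lemma filterlim_lipschitz_comp {T} (F : (T -> Prop) -> Prop) {FF : Filter F}
  (g : T -> R) (P : R -> R) lo hi M z0 :
  (forall z z', lo <= z <= hi -> lo <= z' <= hi -> Rabs (P z - P z') <= M * Rabs (z - z')) ->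
  lo <= z0 <= hi -> F (fun x => lo <= g x <= hi) -> filterlim g F (locally z0) ->
  filterlim (fun x => P (g x)) F (locally (P z0)).
Proof.
  intros HP Hz0 Hgin Hg. apply filterlim_locally. intros eps.
  assert (HM : 0 < Rabs M + 1) by (generalize (Rabs_pos M); lra).
  assert (He : 0 < eps / (Rabs M + 1)) by (apply Rdiv_lt_0_compat; [apply cond_pos | exact HM]).
  generalize (filter_and _ _ Hgin (proj1 (filterlim_locally g z0) Hg (mkposreal _ He))).
  apply filter_imp. intros x [Hx Hball]. change (Rabs (g x - z0) < eps / (Rabs M + 1)) in Hball.
  change (Rabs (P (g x) - P z0) < eps).
  apply Rle_lt_trans with ((Rabs M + 1) * Rabs (g x - z0)).
  - eapply Rle_trans; [apply HP; assumption|].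
    apply Rmult_le_compat_r; [apply Rabs_pos | generalize (Rle_abs M); lra].
  - apply Rlt_le_trans with ((Rabs M + 1) * (eps / (Rabs M + 1))).
    + apply Rmult_lt_compat_l; assumption.
    + right. field. lra.
Qed.

Lemma filterlim_lipschitz_sqrt_minus (F : (R -> Prop) -> Prop) {FF : Filter F} (P : R -> R)
  t0 tau M x0 :
  (forall z z', 0 <= z <= sqrt (tau - t0) -> 0 <= z' <= sqrt (tau - t0) ->
     Rabs (P z - P z') <= M * Rabs (z - z')) ->
  filter_le F (locally x0) -> t0 <= x0 <= tau -> F (fun x => t0 < x < tau) ->
  filterlim (fun x => P (sqrt (tau - x))) F (locally (P (sqrt (tau - x0)))).
Proof.
  intros HP HF Hx0 Hin. apply (filterlim_lipschitz_comp _ _ P 0 (sqrt (tau - t0)) M _ HP).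
  - split; [apply sqrt_pos | apply sqrt_le_1_alt; lra].
  - revert Hin. apply filter_imp. intros x Hx. split; [apply sqrt_pos | apply sqrt_le_1_alt; lra].
  - apply (filterlim_filter_le_1 _ HF), continuous_sqrt_minus.
Qed.

Lemma is_RInt_gen_sqrt_reparam (f P : R -> R) t0 tau M :
  t0 < tau -> P 0 = 0 ->
  (forall z z', 0 <= z <= sqrt (tau - t0) -> 0 <= z' <= sqrt (tau - t0) ->
     Rabs (P z - P z') <= M * Rabs (z - z')) ->
  (forall x y, t0 < x < tau -> t0 < y < tau ->
     is_RInt f x y (P (sqrt (tau - x)) - P (sqrt (tau - y)))) ->
  is_RInt_gen f (at_right t0) (at_left tau) (P (sqrt (tau - t0))).
Proof.
  intros Htt HP0 HP Hf. assert (Hlen : 0 < tau - t0) by lra.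
  assert (Hr : at_right t0 (fun x => t0 < x < tau)).
  { exists (mkposreal _ Hlen). intros x Hx Hx0.
    change (Rabs (x - t0) < tau - t0) in Hx. apply Rabs_def2 in Hx. lra. }
  assert (Hl : at_left tau (fun y => t0 < y < tau)).
  { exists (mkposreal _ Hlen). intros y Hy Hy0.
    change (Rabs (y - tau) < tau - t0) in Hy. apply Rabs_def2 in Hy. lra. }
  assert (Hlim_l : filterlim (fun y => P (sqrt (tau - y))) (at_left tau)
                              (locally (P (sqrt (tau - tau)))))
    by (apply (filterlim_lipschitz_sqrt_minus _ P t0 tau M tau HP);
        [apply filter_le_within | lra | exact Hl]).
  rewrite Rminus_eq_0, sqrt_0, HP0 in Hlim_l.
  apply (filterlimi_lim_ext_loc
           (fun xy : R * R => plus (P (sqrt (tau - fst xy))) (opp (P (sqrt (tau - snd xy)))))).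
  - apply (Filter_prod _ _ _ _ _ Hr Hl). intros x y Hx Hy. apply Hf; assumption.
  - replace (P (sqrt (tau - t0))) with (plus (P (sqrt (tau - t0))) (opp 0))
      by (change (P (sqrt (tau - t0)) + - 0 = P (sqrt (tau - t0))); ring).
    apply (filterlim_comp_2 (G := locally (P (sqrt (tau - t0)))) (H := locally (opp 0))
             (fun xy : R * R => P (sqrt (tau - fst xy)))
             (fun xy : R * R => opp (P (sqrt (tau - snd xy)))) plus).
    + apply (filterlim_comp _ _ _ fst (fun x => P (sqrt (tau - x))) _ (at_right t0));
        [apply filterlim_fst|].
      apply (filterlim_lipschitz_sqrt_minus _ P t0 tau M t0 HP);
        [apply filter_le_within | lra | exact Hr].
    + apply (filterlim_comp _ _ _ snd (fun y => opp (P (sqrt (tau - y)))) _ (at_left tau));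
        [apply filterlim_snd|].
      apply (filterlim_comp _ _ _ (fun y => P (sqrt (tau - y))) opp _ (locally 0));
        [exact Hlim_l | apply (filterlim_opp (V := R_NormedModule))].
    + apply (filterlim_plus (V := R_NormedModule)).
Qed.

Lemma continuity_2d_pt_uniform (G : R -> R -> R) x lo hi :
  (forall s, lo <= s <= hi -> continuity_2d_pt G x s) ->
  forall eps : posreal, exists d : posreal, forall u s,
    Rabs (u - x) < d -> lo <= s <= hi -> Rabs (G u s - G x s) < eps.
Proof.
  intros HG eps. destruct (uniform_continuity_2d_1d' G lo hi x HG eps) as [d Hd].
  exists d. intros u s Hu Hs. apply Rabs_def2 in Hu.
  apply (Hd s x s u); auto; try lra. rewrite Rminus_eq_0, Rabs_R0. apply cond_pos.
Qed.

Lemma continuity_2d_pt_bounded (G : R -> R -> R) x lo hi : lo <= hi ->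
  (forall s, lo <= s <= hi -> continuity_2d_pt G x s) ->
  exists d M, 0 < d /\ forall u s, Rabs (u - x) < d -> lo <= s <= hi -> Rabs (G u s) <= M.
Proof.
  intros Hlh HG. destruct (continuity_2d_pt_uniform G x lo hi HG (mkposreal 1 Rlt_0_1)) as [d Hd].
  destruct (continuous_segment_bounded (G x) lo hi) as [M [_ HM]]; auto.
  { intros s Hs. apply continuity_2d_pt_continuous_r, HG, Hs. }
  exists d, (M + 1). split; [apply cond_pos|]. intros u s Hu Hs.
  specialize (Hd u s Hu Hs). specialize (HM s Hs). simpl in Hd.
  generalize (Rabs_triang_inv (G u s) (G x s)). lra.
Qed.

Lemma continuity_2d_pt_RInt (G : R -> R -> R) x X d0 : 0 < d0 ->
  (forall u s, Rabs (u - x) < d0 -> Rabs s <= Rabs X + d0 -> continuity_2d_pt G u s) ->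
  continuity_2d_pt (fun u z => RInt (G u) 0 z) x X.
Proof.
  intros Hd0 HG eps.
  set (hi := Rabs X + d0 / 2).
  assert (HXabs := conj (Rle_abs X) (Rle_abs (- X))). rewrite Rabs_Ropp in HXabs.
  assert (HGu : forall u s, Rabs (u - x) < d0 / 2 -> - hi <= s <= hi -> continuity_2d_pt G u s).
  { intros u s Hu Hs. apply HG; [lra | apply Rabs_le; unfold hi in Hs; lra]. }
  assert (Hx0 : Rabs (x - x) < d0 / 2) by (rewrite Rminus_eq_0, Rabs_R0; lra).
  assert (Hhi : 0 <= hi) by (unfold hi; lra).
  set (e1 := eps / (2 * (hi + 1))).
  assert (He1 : 0 < e1) by (apply Rdiv_lt_0_compat; [apply cond_pos | lra]).
  destruct (continuity_2d_pt_uniform G x (- hi) hi (fun s Hs => HGu x s Hx0 Hs) (mkposreal e1 He1))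
    as [d1 Hd1].
  destruct (continuous_segment_bounded (G x) (- hi) hi) as [M [HM HMb]];
    [lra | intros s Hs; apply continuity_2d_pt_continuous_r, HGu; assumption |].
  set (e2 := eps / (2 * (M + 1))).
  assert (He2 : 0 < e2) by (apply Rdiv_lt_0_compat; [apply cond_pos | lra]).
  set (d := Rmin (Rmin d1 (d0 / 2)) e2).
  assert (Hd : 0 < d) by (apply Rmin_pos; [apply Rmin_pos|]; [apply cond_pos | lra | lra]).
  assert (Hdle : d <= d1 /\ d <= d0 / 2 /\ d <= e2).
  { unfold d. generalize (Rmin_l (Rmin d1 (d0 / 2)) e2) (Rmin_r (Rmin d1 (d0 / 2)) e2)
      (Rmin_l d1 (d0 / 2)) (Rmin_r d1 (d0 / 2)). lra. }
  exists (mkposreal d Hd). intros u z Hu Hz. simpl in Hu, Hz.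
  assert (Hzin : - hi <= z <= hi) by (apply Rabs_def2 in Hz; unfold hi; lra).
  assert (Hseg : forall s, Rmin 0 z <= s <= Rmax 0 z -> - hi <= s <= hi)
    by (intros s Hs; unfold Rmin, Rmax in Hs; destruct Rle_dec; lra).
  assert (E1 : Rabs (RInt (G u) 0 z - RInt (G x) 0 z) <= e1 * Rabs (z - 0)).
  { apply abs_RInt_minus_le; intros s Hs; specialize (Hseg s Hs).
    - split; apply continuity_2d_pt_continuous_r, HGu; auto; lra.
    - left. apply (Hd1 u s); [lra | assumption]. }
  assert (E2 : Rabs (RInt (G x) 0 z - RInt (G x) 0 X) <= M * Rabs (z - X)).
  { apply (RInt_lipschitz (G x) (- hi) hi); auto; try (unfold hi; lra).
    intros s Hs. apply continuity_2d_pt_continuous_r, HGu; assumption. }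
  assert (E3 : e1 * Rabs (z - 0) < eps / 2).
  { rewrite Rminus_0_r, Rmult_comm.
    apply Rle_lt_trans with (hi * e1); [apply Rmult_le_compat_r; [lra | apply Rabs_le; lra]|].
    apply mul_div_lt_half; [lra | apply cond_pos]. }
  assert (E4 : M * Rabs (z - X) < eps / 2).
  { apply Rle_lt_trans with (M * e2); [apply Rmult_le_compat_l; lra|].
    apply mul_div_lt_half; [lra | apply cond_pos]. }
  replace (RInt (G u) 0 z - RInt (G x) 0 X)
    with ((RInt (G u) 0 z - RInt (G x) 0 z) + (RInt (G x) 0 z - RInt (G x) 0 X)) by ring.
  eapply Rle_lt_trans; [apply Rabs_triang | lra].
Qed.

Lemma sqr_lt_near k tau X : 0 < k -> 0 < tau -> X * X < k * tau ->
  exists d0, 0 < d0 /\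
    forall u s, Rabs (u - tau) < d0 -> Rabs s <= Rabs X + d0 -> 0 < u /\ s * s < k * u.
Proof.
  intros Hk Ht HX. set (Y := Rabs X). set (c := k * tau - Y * Y).
  assert (HY : 0 <= Y) by apply Rabs_pos.
  assert (Hc : 0 < c) by (unfold c, Y; rewrite <- Rabs_mult, Rabs_pos_eq by nra; lra).
  set (d0 := Rmin 1 (Rmin (tau / 2) (c / (2 * Y + 2 + k)))).
  assert (Hq : 0 < c / (2 * Y + 2 + k)) by (apply Rdiv_lt_0_compat; lra).
  assert (Hd : d0 <= 1 /\ d0 <= tau / 2 /\ d0 <= c / (2 * Y + 2 + k)).
  { unfold d0. generalize (Rmin_l 1 (Rmin (tau / 2) (c / (2 * Y + 2 + k))))
      (Rmin_r 1 (Rmin (tau / 2) (c / (2 * Y + 2 + k))))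
      (Rmin_l (tau / 2) (c / (2 * Y + 2 + k))) (Rmin_r (tau / 2) (c / (2 * Y + 2 + k))). lra. }
  assert (Hd0 : 0 < d0) by (unfold d0; repeat apply Rmin_pos; lra).
  exists d0. split; [exact Hd0|]. intros u s Hu Hs. apply Rabs_def2 in Hu. split; [lra|].
  assert (H1 : d0 * (2 * Y + 2 + k) <= c).
  { destruct Hd as (_ & _ & H). apply (Rmult_le_compat_r (2 * Y + 2 + k)) in H; [|lra].
    replace (c / (2 * Y + 2 + k) * (2 * Y + 2 + k)) with c in H by (field; lra). lra. }
  assert (s * s <= (Y + d0) * (Y + d0)).
  { replace (s * s) with (Rabs s * Rabs s) by (rewrite <- Rabs_mult; apply Rabs_pos_eq; nra).
    generalize (Rabs_pos s); nra. }
  unfold c in H1. nra.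
Qed.

Section ScaleFactor.

Variable a : R -> R.
Hypothesis Ha : regular_scale_factor a.
Hypothesis He : even_fun a.

Lemma a_zero : a 0 = 0.
Proof. apply Ha. Qed.

Lemma a_abs x : a x = a (Rabs x).
Proof. unfold Rabs. destruct (Rcase_abs x); [rewrite He|]; reflexivity. Qed.

Lemma a_lt x y : Rabs x < Rabs y -> a x < a y.
Proof.
  intros Hxy. rewrite (a_abs x), (a_abs y).
  destruct Ha as (_ & _ & Hincr & _). apply Hincr; [apply Rabs_pos | exact Hxy].
Qed.

Lemma a_le x y : Rabs x <= Rabs y -> a x <= a y.
Proof.
  intros [Hxy | Hxy]; [left; apply a_lt, Hxy|].
  right. rewrite (a_abs x), (a_abs y), Hxy. reflexivity.
Qed.

Lemma a_nonneg x : 0 <= a x.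
Proof. rewrite <- a_zero. apply a_le. rewrite Rabs_R0. apply Rabs_pos. Qed.

Lemma a_pos x : x <> 0 -> 0 < a x.
Proof. intros Hx. rewrite <- a_zero. apply a_lt. rewrite Rabs_R0. apply Rabs_pos_lt, Hx. Qed.

Lemma a_continuous x : continuous a x.
Proof.
  destruct Ha as (_ & _ & _ & Hc & _).
  apply (continuous_ext (fun y => a (Rabs y))); [intros y; symmetry; apply a_abs|].
  apply (filterlim_comp _ _ _ Rabs a _ (within (fun y => 0 <= y) (locally (Rabs x)))).
  - intros P [e HP]. destruct (proj1 (filterlim_locally _ _) (continuous_Rabs x) e) as [d Hd].
    exists d. intros y Hy. apply HP; [apply Hd, Hy | apply Rabs_pos].
  - apply Hc, Rabs_pos.
Qed.

Lemma is_derive_a t : 0 < t -> is_derive a t (Derive a t).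
Proof. intros Ht. apply Derive_correct, Ha, Ht. Qed.

Lemma continuous_Derive_a t : 0 < t -> continuous (Derive a) t.
Proof. intros Ht. apply (ex_derive_continuous (V := R_NormedModule)), Ha, Ht. Qed.

(* a is increasing, so a'(t) >= 0, and condition (c) presupposes a'(t) <> 0. *)
Lemma Derive_a_pos t : 0 < t -> 0 < Derive a t.
Proof.
  intros Ht. destruct (Rle_or_lt (Derive a t) 0) as [Hle | Hlt]; [exfalso | exact Hlt].
  assert (Hneq : Derive a t <> 0) by (apply Ha, Ht).
  assert (Hneg : Derive a t < 0) by lra.
  destruct (proj1 (is_derive_Reals _ _ _) (is_derive_a t Ht) (- Derive a t / 2)) as [d Hd]; [lra|].
  set (h := Rmin (d / 2) 1).
  assert (Hh : 0 < h < d).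
  { unfold h. split; [apply Rmin_pos; generalize (cond_pos d); lra|].
    generalize (Rmin_l (d / 2) 1) (cond_pos d). lra. }
  specialize (Hd h ltac:(lra) ltac:(rewrite Rabs_pos_eq; lra)).
  assert (Hq : 0 < (a (t + h) - a t) / h).
  { apply Rdiv_lt_0_compat; [|lra]. assert (a t < a (t + h)); [|lra].
    apply a_lt. rewrite !Rabs_pos_eq; lra. }
  apply Rabs_def2 in Hd. lra.
Qed.

Lemma a_small_near_0 e : 0 < e -> exists d, 0 < d /\ forall t, Rabs t < d -> a t < e.
Proof.
  intros He0.
  destruct (proj1 (filterlim_locally (F := locally 0) a _) (a_continuous 0) (mkposreal e He0))
    as [d Hd].
  exists d. split; [apply cond_pos|]. intros t Ht.
  assert (H : Rabs (a t - a 0) < e) by (apply (Hd t), ball_Rabs; rewrite Rminus_0_r; exact Ht).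
  rewrite a_zero, Rminus_0_r in H. generalize (Rle_abs (a t)). lra.
Qed.

(* Under t = tau - s^2, dt / sqrt (a(tau)^2 - a(t)^2) becomes [kernel tau s] ds; the kernel
   stays bounded at s = 0 because the difference quotient [dquot] tends to a'(tau) > 0. *)
Definition dquot tau s : R :=
  if Req_EM_T s 0 then Derive a tau else (a tau - a (tau - s * s)) / (s * s).

Definition kernel tau s : R := 2 / sqrt ((a tau + a (tau - s * s)) * dquot tau s).

Definition integrand (h : R -> R) tau t : R := h t / sqrt (a tau ^ 2 - a t ^ 2).

Definition subst_integrand (h : R -> R) tau s : R := h (tau - s * s) * kernel tau s.

Definition subst_RInt (h : R -> R) tau t : R := RInt (subst_integrand h tau) 0 (sqrt (tau - t)).

Lemma dquot_pos tau s : 0 < tau -> s * s < 2 * tau -> 0 < dquot tau s.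
Proof.
  intros Ht Hs. unfold dquot. destruct (Req_EM_T s 0) as [_ | Hs0]; [apply Derive_a_pos, Ht|].
  assert (Hss : 0 < s * s) by (apply Rsqr_pos_lt, Hs0).
  apply Rdiv_lt_0_compat; [|exact Hss].
  assert (a (tau - s * s) < a tau); [|lra].
  apply a_lt. rewrite (Rabs_pos_eq tau) by lra. apply Rabs_def1; lra.
Qed.

Lemma dquot_continuous_0 tau : 0 < tau -> continuity_2d_pt dquot tau 0.
Proof.
  intros Ht eps.
  destruct (proj1 (filterlim_locally _ _) (continuous_Derive_a tau Ht) eps) as [d1 Hd1].
  assert (Hd1pos := cond_pos d1).
  set (d := Rmin (Rmin (d1 / 2) (tau / 2)) 1).
  assert (Hd : 0 < d) by (unfold d; repeat apply Rmin_pos; lra).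
  assert (Hdle : d <= d1 / 2 /\ d <= tau / 2 /\ d <= 1).
  { unfold d. generalize (Rmin_l (Rmin (d1 / 2) (tau / 2)) 1) (Rmin_r (Rmin (d1 / 2) (tau / 2)) 1)
      (Rmin_l (d1 / 2) (tau / 2)) (Rmin_r (d1 / 2) (tau / 2)). lra. }
  exists (mkposreal d Hd). intros u v Hu Hv. simpl in Hu, Hv. rewrite Rminus_0_r in Hv.
  unfold dquot at 2. destruct (Req_EM_T 0 0) as [_ | C]; [|congruence].
  apply Rabs_def2 in Hu.
  unfold dquot. destruct (Req_EM_T v 0) as [_ | Hv0].
  { apply Hd1, ball_Rabs, Rabs_def1; lra. }
  assert (Hvv : 0 < v * v) by (apply Rsqr_pos_lt, Hv0).
  assert (Hvd : v * v < d).
  { replace (v * v) with (Rabs v * Rabs v) by (rewrite <- Rabs_mult; apply Rabs_pos_eq; lra).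
    generalize (Rabs_pos v). nra. }
  destruct (MVT_gen a (u - v * v) u (Derive a)) as [c [Hc Hmvt]].
  - intros x Hx. apply is_derive_a. rewrite Rmin_left in Hx by lra. lra.
  - intros x _. apply continuity_pt_filterlim, a_continuous.
  - rewrite Rmin_left, Rmax_right in Hc by lra.
    replace ((a u - a (u - v * v)) / (v * v)) with (Derive a c) by (rewrite Hmvt; field; lra).
    apply Hd1, ball_Rabs, Rabs_def1; lra.
Qed.

Lemma dquot_continuous tau s : 0 < tau -> continuity_2d_pt dquot tau s.
Proof.
  intros Ht. destruct (Req_EM_T s 0) as [-> | Hs]; [apply dquot_continuous_0, Ht|].
  apply (continuity_2d_pt_ext_loc (fun u v => (a u - a (u - v * v)) / (v * v))).
  - assert (Has : 0 < Rabs s) by (apply Rabs_pos_lt, Hs).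
    exists (mkposreal _ Has). intros u v _ Hv. simpl in Hv. unfold dquot.
    destruct (Req_EM_T v 0) as [-> | _]; [|reflexivity].
    rewrite Rminus_0_l, Rabs_Ropp in Hv. lra.
  - apply continuity_2d_pt_mult.
    + apply continuity_2d_pt_minus.
      * apply (continuity_2d_pt_comp a (fun u _ => u));
          [apply a_continuous | apply continuity_2d_pt_id1].
      * apply (continuity_2d_pt_comp a (fun u v => u - v * v));
          [apply a_continuous | apply continuity_2d_pt_minus_sqr].
    + apply continuity_2d_pt_inv; [apply continuity_2d_pt_mult; apply continuity_2d_pt_id2|].
      intros C. apply Hs, Rsqr_0_uniq, C.
Qed.

Lemma kernel_radicand_pos tau s : 0 < tau -> s * s < 2 * tau ->
  0 < (a tau + a (tau - s * s)) * dquot tau s.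
Proof.
  intros Ht Hs. apply Rmult_lt_0_compat; [|apply dquot_pos; assumption].
  generalize (a_pos tau ltac:(lra)) (a_nonneg (tau - s * s)). lra.
Qed.

Lemma kernel_pos tau s : 0 < tau -> s * s < 2 * tau -> 0 < kernel tau s.
Proof.
  intros Ht Hs. apply Rdiv_lt_0_compat; [lra|]. apply sqrt_lt_R0, kernel_radicand_pos; assumption.
Qed.

Lemma kernel_continuous tau s : 0 < tau -> s * s < 2 * tau -> continuity_2d_pt kernel tau s.
Proof.
  intros Ht Hs. apply continuity_2d_pt_mult; [apply continuity_2d_pt_const|].
  apply continuity_2d_pt_inv; [|apply Rgt_not_eq, sqrt_lt_R0, kernel_radicand_pos; assumption].
  apply (continuity_2d_pt_comp sqrt); [apply continuous_sqrt|].
  apply continuity_2d_pt_mult; [|apply dquot_continuous, Ht].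
  apply continuity_2d_pt_plus.
  - apply (continuity_2d_pt_comp a (fun u _ => u)); [apply a_continuous | apply continuity_2d_pt_id1].
  - apply (continuity_2d_pt_comp a (fun u v => u - v * v));
      [apply a_continuous | apply continuity_2d_pt_minus_sqr].
Qed.

Lemma kernel_eq tau s : 0 < tau -> 0 < s -> s * s < 2 * tau ->
  kernel tau s = 2 * s / sqrt (a tau ^ 2 - a (tau - s * s) ^ 2).
Proof.
  intros Ht Hs Hs2. assert (Hss : 0 < s * s) by nra.
  assert (E : (a tau + a (tau - s * s)) * dquot tau s = (a tau ^ 2 - a (tau - s * s) ^ 2) / (s * s)).
  { unfold dquot. destruct (Req_EM_T s 0); [lra|]. field. lra. }
  assert (Hpos : 0 < a tau ^ 2 - a (tau - s * s) ^ 2).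
  { generalize (kernel_radicand_pos tau s Ht Hs2). rewrite E. intros H.
    apply (Rmult_lt_reg_r (/ (s * s))); [apply Rinv_0_lt_compat, Hss | lra]. }
  unfold kernel. rewrite E, sqrt_div_alt, sqrt_square by lra.
  field. split; [apply Rgt_not_eq, sqrt_lt_R0, Hpos | lra].
Qed.

Lemma kernel_bounded_near ts : 0 < ts -> exists d M, 0 < d /\ 0 <= M /\
  forall tau s, Rabs (tau - ts) < d -> 0 <= s <= sqrt tau -> kernel tau s <= M.
Proof.
  intros Hts. set (b := sqrt (3 * ts / 2)).
  assert (Hb : b * b = 3 * ts / 2) by (apply sqrt_sqrt; lra).
  destruct (continuity_2d_pt_bounded kernel ts 0 b) as [d [M [Hd HK]]];
    [apply sqrt_pos | intros s Hs; apply kernel_continuous; [lra | nra] |].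
  exists (Rmin d (ts / 2)), M. split; [apply Rmin_pos; lra|].
  split; [apply Rle_trans with (Rabs (kernel ts 0)); [apply Rabs_pos|];
          apply HK; [rewrite Rminus_eq_0, Rabs_R0; lra | split; [lra | apply sqrt_pos]]|].
  intros tau s Htau Hs. generalize (Rmin_l d (ts / 2)) (Rmin_r d (ts / 2)). intros.
  apply Rabs_def2 in Htau.
  apply Rle_trans with (Rabs (kernel tau s)); [apply Rle_abs|]. apply HK; [apply Rabs_def1; lra|].
  split; [lra|]. apply Rle_trans with (sqrt tau); [lra | apply sqrt_le_1_alt; lra].
Qed.

Lemma integrand_continuous h tau t : 0 < tau -> Rabs t < tau -> continuous h t ->
  continuous (integrand h tau) t.
Proof.
  intros Ht Hat Hh. unfold integrand, Rdiv.
  apply (continuous_mult h (fun t => / sqrt (a tau ^ 2 - a t ^ 2))); [exact Hh|].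
  apply continuous_Rinv_comp.
  - apply continuous_sqrt_comp.
    apply (continuous_minus (fun _ => a tau ^ 2) (fun t => a t ^ 2)); [apply continuous_const|].
    apply (continuous_comp a (fun y => y ^ 2)); [apply a_continuous|].
    apply (ex_derive_continuous (V := R_NormedModule)). auto_derive. exact I.
  - apply Rgt_not_eq, sqrt_lt_R0.
    assert (a t < a tau) by (apply a_lt; rewrite (Rabs_pos_eq tau); lra).
    generalize (a_nonneg t). nra.
Qed.

Lemma subst_integrand_continuous h tau s : 0 < tau -> s * s < 2 * tau ->
  continuous h (tau - s * s) -> continuity_2d_pt (subst_integrand h) tau s.
Proof.
  intros Ht Hs Hh. apply continuity_2d_pt_mult; [|apply kernel_continuous; assumption].
  apply (continuity_2d_pt_comp h (fun u v => u - v * v)); [exact Hh | apply continuity_2d_pt_minus_sqr].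
Qed.

Lemma RInt_subst_integrand h tau s1 s2 :
  0 < tau -> 0 < s1 -> 0 < s2 -> s1 * s1 < 2 * tau -> s2 * s2 < 2 * tau ->
  (forall t, Rmin (tau - s2 * s2) (tau - s1 * s1) <= t <= Rmax (tau - s2 * s2) (tau - s1 * s1) ->
     continuous h t) ->
  RInt (subst_integrand h tau) s1 s2 = RInt (integrand h tau) (tau - s2 * s2) (tau - s1 * s1).
Proof.
  intros Ht H1 H2 H1' H2' Hh.
  assert (Hs : forall s, Rmin s1 s2 <= s <= Rmax s1 s2 -> 0 < s /\ s * s < 2 * tau /\
     Rmin (tau - s2 * s2) (tau - s1 * s1) <= tau - s * s <= Rmax (tau - s2 * s2) (tau - s1 * s1)).
  { intros s Hs. unfold Rmin, Rmax in *.
    destruct (Rle_dec s1 s2), (Rle_dec (tau - s2 * s2) (tau - s1 * s1)); repeat split; nra. }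
  assert (Hf : forall t,
     Rmin (tau - s2 * s2) (tau - s1 * s1) <= t <= Rmax (tau - s2 * s2) (tau - s1 * s1) ->
     continuous (integrand h tau) t).
  { intros t Hint. apply integrand_continuous; auto. apply Rabs_def1;
      unfold Rmin, Rmax in Hint; destruct (Rle_dec (tau - s2 * s2) (tau - s1 * s1)); nra. }
  assert (Hg : forall s, Rmin s1 s2 <= s <= Rmax s1 s2 ->
     is_derive (fun s => tau - s * s) s (- (2 * s)) /\ continuous (fun s => - (2 * s)) s).
  { intros s _. split; [auto_derive; [exact I | ring]|].
    apply (ex_derive_continuous (V := R_NormedModule)). auto_derive. exact I. }
  assert (Hfg : forall s, Rmin s1 s2 <= s <= Rmax s1 s2 -> continuous (integrand h tau) (tau - s * s))
    by (intros s Hs'; apply Hf, Hs, Hs').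
  rewrite <- (opp_RInt_swap (integrand h tau)).
  2: { apply (ex_RInt_continuous (V := R_CompleteNormedModule)).
       rewrite Rmin_comm, Rmax_comm. exact Hf. }
  rewrite <- (RInt_comp (integrand h tau) (fun s => tau - s * s) (fun s => - (2 * s))) by auto.
  rewrite <- RInt_opp by (eexists; apply (is_RInt_comp _ (fun s => tau - s * s)); auto).
  apply RInt_ext. intros s Hs'. destruct (Hs s ltac:(lra)) as (Hs0 & Hs2 & _).
  unfold subst_integrand, integrand. rewrite kernel_eq by assumption.
  change (h (tau - s * s) * (2 * s / sqrt (a tau ^ 2 - a (tau - s * s) ^ 2)) =
          - (- (2 * s) * (h (tau - s * s) / sqrt (a tau ^ 2 - a (tau - s * s) ^ 2)))).
  unfold Rdiv. ring.
Qed.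

Lemma is_RInt_gen_integrand h tau t0 : 0 < tau -> - tau < t0 < tau ->
  (forall t, t0 <= t <= tau -> continuous h t) ->
  is_RInt_gen (integrand h tau) (at_right t0) (at_left tau) (subst_RInt h tau t0).
Proof.
  intros Ht Ht0 Hh. set (S := sqrt (tau - t0)).
  assert (HS : S * S = tau - t0) by (apply sqrt_sqrt; lra).
  assert (HG : forall s, 0 <= s <= S -> continuous (subst_integrand h tau) s).
  { intros s Hs. apply continuity_2d_pt_continuous_r, subst_integrand_continuous; [lra | nra |].
    apply Hh. nra. }
  destruct (continuous_segment_bounded (subst_integrand h tau) 0 S) as [M [_ HM]];
    [apply sqrt_pos | exact HG |].
  apply (is_RInt_gen_sqrt_reparam _ (fun z => RInt (subst_integrand h tau) 0 z) t0 tau M);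
    [lra | apply (RInt_point (V := R_CompleteNormedModule)) | |].
  - intros z z' Hz Hz'. apply (RInt_lipschitz _ 0 S); auto. split; [lra | apply sqrt_pos].
  - intros x y Hx Hy.
    assert (Hsq : forall z, t0 < z < tau ->
      0 < sqrt (tau - z) <= S /\ sqrt (tau - z) * sqrt (tau - z) = tau - z).
    { intros z Hz.
      split; [split; [apply sqrt_lt_R0; lra | apply sqrt_le_1_alt; lra] | apply sqrt_sqrt; lra]. }
    destruct (Hsq x Hx) as [Hx1 Hx2]. destruct (Hsq y Hy) as [Hy1 Hy2].
    rewrite (RInt_minus_lower _ 0 S) by (auto; lra).
    rewrite RInt_subst_integrand by (try lra; nra || (intros t Hint; apply Hh;
      rewrite Hx2, Hy2 in Hint; unfold Rmin, Rmax in Hint; destruct Rle_dec; lra)).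
    rewrite Hx2, Hy2. replace (tau - (tau - x)) with x by ring.
    replace (tau - (tau - y)) with y by ring.
    apply (RInt_correct (V := R_CompleteNormedModule)).
    apply (ex_RInt_continuous (V := R_CompleteNormedModule)).
    intros z Hz. assert (t0 < z < tau) by (unfold Rmin, Rmax in Hz; destruct Rle_dec; lra).
    apply integrand_continuous; [lra | apply Rabs_def1; lra | apply Hh; lra].
Qed.

Lemma subst_RInt_continuous h k ts t0 : 0 < k <= 2 -> 0 < ts -> t0 <= ts -> ts - t0 < k * ts ->
  (forall u s, 0 < u -> s * s < k * u -> continuous h (u - s * s)) ->
  continuity_2d_pt (subst_RInt h) ts t0.
Proof.
  intros Hk Hts Ht0 Hlt Hh. set (X := sqrt (ts - t0)).
  assert (HX : X * X < k * ts) by (unfold X; rewrite sqrt_sqrt; lra).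
  destruct (sqr_lt_near k ts X) as [d0 [Hd0 Hnear]]; [lra | lra | exact HX |].
  apply (continuity_2d_pt_comp_2 (fun u z => RInt (subst_integrand h u) 0 z)
           (fun u _ => u) (fun u t => sqrt (u - t))).
  - apply (continuity_2d_pt_RInt _ ts X d0 Hd0). intros u s Hu Hs.
    destruct (Hnear u s Hu Hs) as [Hu0 Hs2].
    apply subst_integrand_continuous; [lra | nra | apply Hh; assumption].
  - apply continuity_2d_pt_id1.
  - apply (continuity_2d_pt_comp sqrt); [apply continuous_sqrt|].
    apply continuity_2d_pt_minus; [apply continuity_2d_pt_id1 | apply continuity_2d_pt_id2].
Qed.

Lemma rho_of_eq tau t0 : 0 < tau -> - tau < t0 < tau -> rho_of a tau t0 = subst_RInt a tau t0.
Proof.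
  intros Ht Ht0. apply (is_RInt_gen_unique (integrand a tau)), is_RInt_gen_integrand; auto.
  intros t _. apply a_continuous.
Qed.

Lemma rhoM_eq tau : 0 < tau -> rhoM a tau = subst_RInt a tau 0.
Proof. intros Ht. apply rho_of_eq; lra. Qed.

Lemma subst_RInt_a_continuous ts t0 : 0 < ts -> - ts < t0 <= ts ->
  continuity_2d_pt (subst_RInt a) ts t0.
Proof.
  intros Hts Ht0. apply (subst_RInt_continuous a 2); try lra.
  intros u s _ _. apply a_continuous.
Qed.

Lemma subst_RInt_a_minus tau t1 t2 : 0 < tau -> - tau < t1 < tau -> - tau < t2 < tau ->
  subst_RInt a tau t1 - subst_RInt a tau t2 = RInt (integrand a tau) t1 t2.
Proof.
  intros Ht H1 H2.
  set (s1 := sqrt (tau - t1)). set (s2 := sqrt (tau - t2)). set (hi := Rmax s1 s2).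
  assert (E1 : s1 * s1 = tau - t1) by (apply sqrt_sqrt; lra).
  assert (E2 : s2 * s2 = tau - t2) by (apply sqrt_sqrt; lra).
  assert (P1 : 0 < s1) by (apply sqrt_lt_R0; lra).
  assert (P2 : 0 < s2) by (apply sqrt_lt_R0; lra).
  assert (Hhi : hi * hi < 2 * tau) by (unfold hi, Rmax; destruct Rle_dec; lra).
  assert (Hs1 : s1 <= hi) by apply Rmax_l. assert (Hs2 : s2 <= hi) by apply Rmax_r.
  unfold subst_RInt. fold s1 s2.
  rewrite (RInt_minus_lower _ 0 hi); try lra.
  - rewrite RInt_subst_integrand by (auto; try nra; intros; apply a_continuous).
    rewrite E1, E2. f_equal; ring.
  - intros s Hs. apply continuity_2d_pt_continuous_r, subst_integrand_continuous;
      [lra | nra | apply a_continuous].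
Qed.

Lemma integrand_a_even tau x : integrand a tau (- x) = integrand a tau x.
Proof. unfold integrand. rewrite He. reflexivity. Qed.

Lemma integrand_a_nonneg tau x : Rabs x < tau -> 0 <= integrand a tau x.
Proof.
  intros Hx. unfold integrand. apply Rmult_le_pos; [apply a_nonneg|].
  left. apply Rinv_0_lt_compat, sqrt_lt_R0.
  assert (a x < a tau) by (apply a_lt; rewrite (Rabs_pos_eq tau); generalize (Rabs_pos x); lra).
  generalize (a_nonneg x). nra.
Qed.

Lemma integrand_a_pos tau x : x <> 0 -> Rabs x < tau -> 0 < integrand a tau x.
Proof.
  intros Hx0 Hx. destruct (integrand_a_nonneg tau x Hx) as [H | H]; [exact H|].
  exfalso. unfold integrand in H. symmetry in H. apply Rmult_integral in H.
  destruct H as [H | H]; [generalize (a_pos x Hx0); lra|].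
  revert H. apply Rinv_neq_0_compat, Rgt_not_eq, sqrt_lt_R0.
  assert (a x < a tau) by (apply a_lt; rewrite (Rabs_pos_eq tau); generalize (Rabs_pos x); lra).
  generalize (a_nonneg x). nra.
Qed.

Lemma subst_RInt_a_decreasing tau t1 t2 : 0 < tau -> - tau < t1 -> t1 < t2 -> t2 < tau ->
  subst_RInt a tau t2 < subst_RInt a tau t1.
Proof.
  intros Ht H1 H12 H2.
  assert (subst_RInt a tau t1 - subst_RInt a tau t2 > 0); [|lra].
  rewrite subst_RInt_a_minus by lra.
  set (m := (t1 + t2) / 2).
  assert (Hc : forall x, t1 <= x <= t2 -> continuous (integrand a tau) x)
    by (intros x Hx; apply integrand_continuous; [lra | apply Rabs_def1; lra | apply a_continuous]).
  assert (Hpos : forall lo hi, t1 <= lo -> lo < hi -> hi <= t2 -> (hi <= 0 \/ 0 <= lo) ->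
     0 < RInt (integrand a tau) lo hi).
  { intros lo hi Hlo Hlh Hhi Hsgn. apply RInt_gt_0; [lra| |intros; apply Hc; lra].
    intros x Hx. apply integrand_a_pos; [lra | apply Rabs_def1; lra]. }
  assert (Hnn : forall lo hi, t1 <= lo -> lo <= hi -> hi <= t2 -> 0 <= RInt (integrand a tau) lo hi).
  { intros lo hi Hlo Hlh Hhi. apply RInt_ge_0; [lra | apply (ex_RInt_segment _ t1 t2); auto; lra|].
    intros x Hx. apply integrand_a_nonneg, Rabs_def1; lra. }
  rewrite <- (RInt_Chasles _ t1 m t2) by (apply (ex_RInt_segment _ t1 t2); auto; unfold m; lra).
  change (RInt (integrand a tau) t1 m + RInt (integrand a tau) m t2 > 0).
  destruct (Rle_lt_dec m 0).
  - generalize (Hpos t1 m ltac:(lra) ltac:(unfold m; lra) ltac:(unfold m; lra) ltac:(lra))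
      (Hnn m t2 ltac:(unfold m; lra) ltac:(unfold m; lra) ltac:(lra)). lra.
  - generalize (Hnn t1 m ltac:(lra) ltac:(unfold m; lra) ltac:(unfold m; lra))
      (Hpos m t2 ltac:(unfold m; lra) ltac:(unfold m; lra) ltac:(lra) ltac:(lra)). lra.
Qed.

Lemma subst_RInt_a_opp tau t : 0 < tau -> 0 <= t < tau ->
  subst_RInt a tau (- t) = 2 * subst_RInt a tau 0 - subst_RInt a tau t.
Proof.
  intros Ht Ht0.
  assert (subst_RInt a tau (- t) - subst_RInt a tau 0 = subst_RInt a tau 0 - subst_RInt a tau t);
    [|lra].
  rewrite !subst_RInt_a_minus by lra. apply RInt_even; [apply integrand_a_even|].
  apply (ex_RInt_segment _ 0 t); [|lra|lra]. intros x Hx.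
  apply integrand_continuous; [lra | apply Rabs_def1; lra | apply a_continuous].
Qed.

Lemma subst_RInt_a_tau tau : subst_RInt a tau tau = 0.
Proof.
  unfold subst_RInt. rewrite Rminus_eq_0, sqrt_0. apply (RInt_point (V := R_CompleteNormedModule)).
Qed.

Lemma subst_RInt_a_surj tau rho : 0 < tau -> 0 < rho < 2 * subst_RInt a tau 0 ->
  exists t, - tau < t < tau /\ subst_RInt a tau t = rho.
Proof.
  intros Ht Hr. set (m := Rmin rho (2 * subst_RInt a tau 0 - rho)).
  assert (Hm : 0 < m) by (apply Rmin_pos; lra).
  assert (Hcont : forall t, - tau < t <= tau -> continuous (subst_RInt a tau) t)
    by (intros t Htt; apply continuity_2d_pt_continuous_r, subst_RInt_a_continuous; lra).
  destruct (proj1 (filterlim_locally (F := locally tau) _ _) (Hcont tau ltac:(lra)) (mkposreal m Hm))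
    as [d Hd].
  set (t2 := tau - Rmin d tau / 2).
  assert (Ht2 : 0 < t2 < tau)
    by (unfold t2; generalize (Rmin_l d tau) (Rmin_r d tau) (Rmin_pos d tau (cond_pos d) Ht); lra).
  assert (Hsmall : subst_RInt a tau t2 < m).
  { assert (Hb : ball tau d t2).
    { apply ball_Rabs. unfold t2.
      rewrite Rabs_left by (generalize (Rmin_pos d tau (cond_pos d) Ht); lra).
      generalize (Rmin_l d tau) (Rmin_pos d tau (cond_pos d) Ht). lra. }
    assert (Habs : Rabs (subst_RInt a tau t2 - subst_RInt a tau tau) < m) by exact (Hd t2 Hb).
    rewrite subst_RInt_a_tau, Rminus_0_r in Habs. apply Rabs_def2 in Habs. lra. }
  generalize (Rmin_l rho (2 * subst_RInt a tau 0 - rho)) (Rmin_r rho (2 * subst_RInt a tau 0 - rho)).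
  fold m. intros Hm1 Hm2.
  assert (Hopp := subst_RInt_a_opp tau t2 Ht ltac:(lra)).
  destruct (Ranalysis5.IVT_interv (fun t => rho - subst_RInt a tau t) (- t2) t2) as [t [Htr Hteq]];
    [|lra | lra | lra | exists t; split; lra].
  intros t Htr. apply continuity_pt_filterlim.
  apply (continuous_minus (fun _ => rho) (subst_RInt a tau));
    [apply continuous_const | apply Hcont; lra].
Qed.

Lemma t0f_spec tau rho : 0 < tau -> 0 < rho < 2 * rhoM a tau ->
  - tau < t0f a tau rho < tau /\ subst_RInt a tau (t0f a tau rho) = rho.
Proof.
  intros Ht Hr. rewrite rhoM_eq in Hr by exact Ht.
  assert (H : - tau < t0f a tau rho < tau /\ rho = rho_of a tau (t0f a tau rho)).
  { unfold t0f. apply epsilon_spec. destruct (subst_RInt_a_surj tau rho Ht Hr) as [t [Ht1 Ht2]].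
    exists t. split; [exact Ht1|]. rewrite rho_of_eq; auto. }
  destruct H as [H1 H2]. split; [exact H1|]. rewrite <- rho_of_eq by assumption. symmetry. exact H2.
Qed.

Lemma subst_RInt_a_lt_iff tau t1 t2 : 0 < tau -> - tau < t1 < tau -> - tau < t2 < tau ->
  subst_RInt a tau t2 < subst_RInt a tau t1 <-> t1 < t2.
Proof.
  intros Ht H1 H2. split; intros H.
  - destruct (Rlt_le_dec t1 t2) as [| [Hlt | Heq]]; [assumption | | subst t2; lra].
    generalize (subst_RInt_a_decreasing tau t2 t1 Ht ltac:(lra) Hlt ltac:(lra)). lra.
  - apply subst_RInt_a_decreasing; lra.
Qed.

Lemma subst_RInt_a_nonneg tau t : 0 < tau -> - tau < t <= tau -> 0 <= subst_RInt a tau t.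
Proof.
  intros Ht Htt. set (S := sqrt (tau - t)).
  assert (HS : S * S = tau - t) by (apply sqrt_sqrt; lra).
  assert (HS0 : 0 <= S) by apply sqrt_pos.
  assert (Hs : forall s, 0 <= s <= S -> s * s < 2 * tau) by (intros; nra).
  unfold subst_RInt. fold S. apply RInt_ge_0; [exact HS0| |].
  - apply (ex_RInt_segment _ 0 S); try lra. intros s Hs'.
    apply continuity_2d_pt_continuous_r, subst_integrand_continuous;
      [lra | apply Hs, Hs' | apply a_continuous].
  - intros s Hs'. apply Rmult_le_pos; [apply a_nonneg | left; apply kernel_pos; [lra | apply Hs; lra]].
Qed.

Lemma rhoM_pos tau : 0 < tau -> 0 < rhoM a tau.
Proof.
  intros Ht. rewrite rhoM_eq by exact Ht.
  generalize (subst_RInt_a_decreasing tau 0 (tau / 2) Ht ltac:(lra) ltac:(lra) ltac:(lra))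
    (subst_RInt_a_nonneg tau (tau / 2) Ht ltac:(lra)). lra.
Qed.

Lemma t0f_rhoM tau : 0 < tau -> t0f a tau (rhoM a tau) = 0.
Proof.
  intros Ht. assert (Hr := rhoM_pos tau Ht).
  destruct (t0f_spec tau (rhoM a tau) Ht ltac:(lra)) as [Hb Heq].
  set (t := t0f a tau (rhoM a tau)) in *. rewrite rhoM_eq in Heq by exact Ht.
  destruct (Rtotal_order t 0) as [Hlt | [Heq0 | Hgt]]; [exfalso | exact Heq0 | exfalso].
  - apply (subst_RInt_a_lt_iff tau _ 0 Ht Hb) in Hlt; lra.
  - apply (subst_RInt_a_lt_iff tau 0 _ Ht ltac:(lra) Hb) in Hgt; lra.
Qed.

Definition rho_region tau rho : Prop := 0 < tau /\ 0 < rho < 2 * rhoM a tau.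

(* t0 is squeezed between ts - e and ts + e because the decreasing map t |-> rho(tau, t)
   sends these two points to either side of rho, uniformly for (tau, rho) near (taus, rhos). *)
Lemma t0f_continuous taus rhos : rho_region taus rhos ->
  continuity_2d_pt_on rho_region (t0f a) taus rhos.
Proof.
  intros [Hts Hrs] eps.
  destruct (t0f_spec taus rhos Hts Hrs) as [Hb Hv]. set (ts := t0f a taus rhos) in *.
  set (F := subst_RInt a).
  set (e := Rmin eps (Rmin ((taus - ts) / 2) ((ts + taus) / 2))).
  assert (Hele : e <= eps /\ e <= (taus - ts) / 2 /\ e <= (ts + taus) / 2).
  { unfold e. generalize (Rmin_l eps (Rmin ((taus - ts) / 2) ((ts + taus) / 2)))
     (Rmin_r eps (Rmin ((taus - ts) / 2) ((ts + taus) / 2)))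
     (Rmin_l ((taus - ts) / 2) ((ts + taus) / 2)) (Rmin_r ((taus - ts) / 2) ((ts + taus) / 2)). lra. }
  assert (He0 : 0 < e) by (unfold e; repeat apply Rmin_pos; try apply cond_pos; lra).
  assert (D1 : F taus (ts + e) < rhos) by (rewrite <- Hv; apply subst_RInt_a_decreasing; lra).
  assert (D2 : rhos < F taus (ts - e)) by (rewrite <- Hv; apply subst_RInt_a_decreasing; lra).
  set (g := Rmin (F taus (ts - e) - rhos) (rhos - F taus (ts + e))).
  assert (Hg : 0 < g /\ g <= F taus (ts - e) - rhos /\ g <= rhos - F taus (ts + e))
    by (unfold g; split; [apply Rmin_pos; lra | split; [apply Rmin_l | apply Rmin_r]]).
  assert (Hg2 : 0 < g / 2) by lra.
  destruct (subst_RInt_a_continuous taus (ts - e) Hts ltac:(lra) (mkposreal _ Hg2)) as [d1 H1].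
  destruct (subst_RInt_a_continuous taus (ts + e) Hts ltac:(lra) (mkposreal _ Hg2)) as [d2 H2].
  set (d := Rmin (Rmin d1 d2) (Rmin (e / 2) (g / 2))).
  assert (Hd : d <= d1 /\ d <= d2 /\ d <= e / 2 /\ d <= g / 2).
  { unfold d. generalize (Rmin_l (Rmin d1 d2) (Rmin (e / 2) (g / 2)))
      (Rmin_r (Rmin d1 d2) (Rmin (e / 2) (g / 2))) (Rmin_l d1 d2) (Rmin_r d1 d2)
      (Rmin_l (e / 2) (g / 2)) (Rmin_r (e / 2) (g / 2)). lra. }
  assert (Hd0 : 0 < d) by (unfold d; repeat apply Rmin_pos; try apply cond_pos; lra).
  exists (mkposreal d Hd0). simpl. intros tau rho Htau Hrho [Ht Hr].
  destruct (t0f_spec tau rho Ht Hr) as [Hb' Hv'].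
  set (t := t0f a tau rho) in *. fold F in Hv'.
  assert (A1 : Rabs (F tau (ts - e) - F taus (ts - e)) < g / 2)
    by (apply H1; [lra | rewrite Rminus_eq_0, Rabs_R0; apply cond_pos]).
  assert (A2 : Rabs (F tau (ts + e) - F taus (ts + e)) < g / 2)
    by (apply H2; [lra | rewrite Rminus_eq_0, Rabs_R0; apply cond_pos]).
  apply Rabs_def2 in A1. apply Rabs_def2 in A2. apply Rabs_def2 in Htau. apply Rabs_def2 in Hrho.
  assert (L1 : ts - e < t) by (apply (subst_RInt_a_lt_iff tau); [lra | lra | lra | fold F; lra]).
  assert (L2 : t < ts + e) by (apply (subst_RInt_a_lt_iff tau); [lra | lra | lra | fold F; lra]).
  apply Rabs_def1; lra.
Qed.

Definition chi_subst tau t : R := a tau * subst_RInt (fun x => / a x) tau (Rabs t).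

Definition gthth_subst tau t : R := if Req_EM_T t 0 then 0 else (a t * chi_subst tau t) ^ 2.

Lemma continuous_inv_a x : x <> 0 -> continuous (fun y => / a y) x.
Proof. intros Hx. apply continuous_Rinv_comp; [apply a_continuous | apply Rgt_not_eq, a_pos, Hx]. Qed.

Lemma chi_eq s tau : 0 < s < tau -> chi a s tau = chi_subst tau s.
Proof.
  intros Hs. unfold chi, imp_int, chi_subst. rewrite Rabs_pos_eq by lra.
  replace (fun t => / a t * (a tau / sqrt (a tau ^ 2 - a t ^ 2)))
    with (fun t => scal (a tau) (integrand (fun x => / a x) tau t))
    by (apply functional_extensionality; intros t; unfold integrand, scal; simpl;
        unfold mult; simpl; unfold Rdiv; ring).
  apply is_RInt_gen_unique, (is_RInt_gen_scal (V := R_NormedModule)), is_RInt_gen_integrand;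
    [lra | lra |].
  intros t Ht. apply continuous_inv_a. lra.
Qed.

Lemma subst_integrand_inv_a_nonneg tau s : 0 < tau -> s * s < tau ->
  0 <= subst_integrand (fun x => / a x) tau s.
Proof.
  intros Ht Hs. apply Rmult_le_pos.
  - left. apply Rinv_0_lt_compat, a_pos. lra.
  - left. apply kernel_pos; lra.
Qed.

Lemma chi_subst_continuous ts t : 0 < Rabs t < ts -> continuity_2d_pt chi_subst ts t.
Proof.
  intros Ht. apply continuity_2d_pt_mult.
  - apply (continuity_2d_pt_comp a (fun u _ => u)); [apply a_continuous | apply continuity_2d_pt_id1].
  - apply (continuity_2d_pt_comp_2 (subst_RInt (fun x => / a x)) (fun u _ => u) (fun _ v => Rabs v)).
    + apply (subst_RInt_continuous _ 1); try lra.
      intros u s Hu Hs. apply continuous_inv_a. lra.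
    + apply continuity_2d_pt_id1.
    + apply (continuity_2d_pt_comp Rabs); [apply continuous_Rabs | apply continuity_2d_pt_id2].
Qed.

Lemma chi_subst_nonneg tau t : 0 < Rabs t < tau -> 0 <= chi_subst tau t.
Proof.
  intros Ht. set (S := sqrt (tau - Rabs t)).
  assert (HS : S * S = tau - Rabs t) by (apply sqrt_sqrt; lra).
  assert (HS0 : 0 <= S) by apply sqrt_pos.
  apply Rmult_le_pos; [apply a_nonneg|].
  unfold subst_RInt. fold S. apply RInt_ge_0; [exact HS0| |].
  - apply (ex_RInt_segment _ 0 S); try lra. intros s Hs.
    apply continuity_2d_pt_continuous_r, subst_integrand_continuous; [lra | nra |].
    apply continuous_inv_a. nra.
  - intros s Hs. apply subst_integrand_inv_a_nonneg; nra.
Qed.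

(* On [sqrt (tau - delta), sqrt (tau - |t|)] we have 1 / a(tau - s^2) <= 1 / a(t), and this
   interval has length at most sqrt delta. *)
Lemma a_mul_chi_subst_le tau t delta M : 0 < tau -> 0 < Rabs t <= delta -> delta < tau -> 0 <= M ->
  (forall s, 0 <= s <= sqrt tau -> kernel tau s <= M) ->
  a t * chi_subst tau t <= a t * chi_subst tau delta + a tau * M * sqrt delta.
Proof.
  intros Ht Htd Hdt HM HK.
  set (G := subst_integrand (fun x => / a x) tau).
  set (p := sqrt (tau - delta)). set (q := sqrt (tau - Rabs t)).
  assert (Hp : p * p = tau - delta) by (apply sqrt_sqrt; lra).
  assert (Hq : q * q = tau - Rabs t) by (apply sqrt_sqrt; lra).
  assert (Hp0 : 0 < p) by (apply sqrt_lt_R0; lra).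
  assert (Hpq : p <= q) by (apply sqrt_le_1_alt; lra).
  assert (Hqt : q <= sqrt tau) by (apply sqrt_le_1_alt; lra).
  assert (Hat : 0 < a t) by (apply a_pos; intros ->; rewrite Rabs_R0 in Htd; lra).
  assert (HGc : forall s, 0 <= s <= q -> continuous G s).
  { intros s Hs. apply continuity_2d_pt_continuous_r, subst_integrand_continuous; [lra | nra |].
    apply continuous_inv_a. nra. }
  assert (Hsplit : RInt G 0 q = RInt G 0 p + RInt G p q).
  { assert (E := RInt_minus_lower G 0 q 0 q p HGc ltac:(lra) ltac:(lra) ltac:(lra)). lra. }
  assert (Hnear : RInt G p q <= (q - p) * (/ a t * M)).
  { rewrite <- (RInt_const (V := R_CompleteNormedModule)).
    apply RInt_le; [exact Hpq | apply (ex_RInt_segment _ 0 q); auto; lra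
                   | apply (ex_RInt_const (V := R_CompleteNormedModule)) |].
    intros s Hs. unfold G, subst_integrand. apply Rmult_le_compat.
    - left. apply Rinv_0_lt_compat, a_pos. nra.
    - left. apply kernel_pos; nra.
    - apply Rinv_le_contravar; [exact Hat|]. apply a_le.
      rewrite (Rabs_pos_eq (tau - s * s)) by nra. nra.
    - apply HK. lra. }
  assert (Hlen : q - p <= sqrt delta).
  { apply Rle_trans with (sqrt (tau - Rabs t - (tau - delta))).
    - apply sqrt_minus_sqrt_le. lra.
    - apply sqrt_le_1_alt. lra. }
  assert (Hfar : a t * (a tau * RInt G 0 p) = a t * chi_subst tau delta)
    by (unfold chi_subst, subst_RInt; rewrite (Rabs_pos_eq delta) by lra; reflexivity).
  assert (Hclose : a t * (a tau * RInt G p q) <= a tau * M * sqrt delta).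
  { apply Rle_trans with (a tau * M * (q - p)).
    - replace (a tau * M * (q - p)) with (a t * (a tau * ((q - p) * (/ a t * M)))) by (field; lra).
      apply Rmult_le_compat_l; [lra|]. apply Rmult_le_compat_l; [apply a_nonneg | exact Hnear].
    - apply Rmult_le_compat_l; [apply Rmult_le_pos; [apply a_nonneg | exact HM] | exact Hlen]. }
  unfold chi_subst at 1, subst_RInt. fold q G. rewrite Hsplit. lra.
Qed.

Lemma a_mul_chi_subst_small ts : 0 < ts -> forall e, 0 < e -> exists d, 0 < d /\
  forall tau t, Rabs (tau - ts) < d -> 0 < Rabs t < d -> 0 <= a t * chi_subst tau t < e.
Proof.
  intros Hts e He0.
  destruct (kernel_bounded_near ts Hts) as [d1 [M [Hd1 [HM HK]]]].
  set (A := a (2 * ts)). assert (HA : 0 <= A) by apply a_nonneg.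
  set (c := e / (2 * (A * M + 1))).
  assert (Hc : 0 < c) by (apply Rdiv_lt_0_compat; [lra | nra]).
  set (delta := Rmin (ts / 4) (c * c)).
  assert (Hdelta : 0 < delta /\ delta <= ts / 4 /\ delta <= c * c)
    by (unfold delta; split; [apply Rmin_pos; nra | split; [apply Rmin_l | apply Rmin_r]]).
  assert (Hsd : sqrt delta <= c) by (rewrite <- (sqrt_square c) by lra; apply sqrt_le_1_alt; lra).
  destruct (continuity_2d_pt_bounded chi_subst ts delta delta) as [d2 [B [Hd2 HB]]]; [lra | |].
  { intros s Hs. replace s with delta by lra. apply chi_subst_continuous. rewrite Rabs_pos_eq; lra. }
  assert (HB0 : 0 <= B) by (apply Rle_trans with (Rabs (chi_subst ts delta)); [apply Rabs_pos|];
    apply HB; [rewrite Rminus_eq_0, Rabs_R0 | ]; lra).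
  destruct (a_small_near_0 (e / (2 * (B + 1)))) as [d3 [Hd3 Ha0]]; [apply Rdiv_lt_0_compat; lra|].
  set (d := Rmin (Rmin d1 (ts / 4)) (Rmin delta (Rmin d2 d3))).
  assert (Hd : 0 < d /\ d <= d1 /\ d <= ts / 4 /\ d <= delta /\ d <= d2 /\ d <= d3).
  { unfold d. generalize (Rmin_l (Rmin d1 (ts / 4)) (Rmin delta (Rmin d2 d3)))
      (Rmin_r (Rmin d1 (ts / 4)) (Rmin delta (Rmin d2 d3))) (Rmin_l d1 (ts / 4)) (Rmin_r d1 (ts / 4))
      (Rmin_l delta (Rmin d2 d3)) (Rmin_r delta (Rmin d2 d3)) (Rmin_l d2 d3) (Rmin_r d2 d3).
    intros. repeat split; try lra. repeat apply Rmin_pos; lra. }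
  exists d. split; [apply Hd|]. intros tau t Htau Ht.
  assert (Htau' := Htau). apply Rabs_def2 in Htau'.
  assert (Hat : 0 < a t) by (apply a_pos; intros ->; rewrite Rabs_R0 in Ht; lra).
  assert (Hle : a t * chi_subst tau t <= a t * chi_subst tau delta + a tau * M * sqrt delta)
    by (apply a_mul_chi_subst_le; [lra | lra | lra | lra | intros s Hs; apply HK; lra]).
  assert (Hfar : a t * chi_subst tau delta < e / 2).
  { apply Rle_lt_trans with (B * (e / (2 * (B + 1)))); [|apply mul_div_lt_half; lra].
    rewrite Rmult_comm. apply Rmult_le_compat; [apply chi_subst_nonneg; rewrite Rabs_pos_eq; lra | lra
      | apply Rle_trans with (Rabs (chi_subst tau delta)); [apply Rle_abs | apply HB; lra]
      | left; apply Ha0; lra]. }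
  assert (Hclose : a tau * M * sqrt delta < e / 2).
  { assert (HaA : a tau <= A) by (apply a_le; rewrite !Rabs_pos_eq; lra).
    apply Rle_lt_trans with (A * M * c); [|apply mul_div_lt_half; nra].
    apply Rmult_le_compat; [apply Rmult_le_pos; [apply a_nonneg | lra] | apply sqrt_pos | | lra].
    apply Rmult_le_compat_r; lra. }
  split; [apply Rmult_le_pos; [lra | apply chi_subst_nonneg; lra] | lra].
Qed.

Lemma gthth_subst_continuous_0 ts : 0 < ts -> continuity_2d_pt gthth_subst ts 0.
Proof.
  intros Hts eps. set (e := Rmin 1 eps).
  assert (Hele : 0 < e /\ e <= 1 /\ e <= eps)
    by (unfold e; split;
        [apply Rmin_pos; [lra | apply cond_pos] | split; [apply Rmin_l | apply Rmin_r]]).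
  destruct (a_mul_chi_subst_small ts Hts e ltac:(lra)) as [d [Hd Hsmall]].
  exists (mkposreal d Hd). simpl. intros tau t Htau Ht. rewrite Rminus_0_r in Ht.
  unfold gthth_subst. destruct (Req_EM_T 0 0) as [_ | C]; [|congruence].
  destruct (Req_EM_T t 0) as [_ | Ht0]; [rewrite Rminus_0_r, Rabs_R0; apply cond_pos|].
  destruct (Hsmall tau t Htau ltac:(split; [apply Rabs_pos_lt, Ht0 | exact Ht])) as [H0 H1].
  rewrite Rminus_0_r, Rabs_pos_eq by (apply pow2_ge_0). simpl. nra.
Qed.

Lemma gthth_subst_continuous ts t : 0 < ts -> Rabs t < ts -> continuity_2d_pt gthth_subst ts t.
Proof.
  intros Hts Ht. destruct (Req_EM_T t 0) as [-> | Ht0]; [apply gthth_subst_continuous_0, Hts|].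
  assert (Hat : 0 < Rabs t) by (apply Rabs_pos_lt, Ht0).
  apply (continuity_2d_pt_ext_loc (fun u v => (a v * chi_subst u v) ^ 2)).
  - exists (mkposreal _ Hat). simpl. intros u v _ Hv. unfold gthth_subst.
    destruct (Req_EM_T v 0) as [-> | _]; [|reflexivity].
    rewrite Rminus_0_l, Rabs_Ropp in Hv. lra.
  - apply (continuity_2d_pt_comp (fun x => x ^ 2)).
    + apply (ex_derive_continuous (V := R_NormedModule)). auto_derive. exact I.
    + apply continuity_2d_pt_mult; [|apply chi_subst_continuous; lra].
      apply (continuity_2d_pt_comp a (fun _ v => v)); [apply a_continuous | apply continuity_2d_pt_id2].
Qed.

Lemma gthth_t0_eq tau t : t <> 0 -> Rabs t < tau -> gthth_t0 a tau t = gthth_subst tau t.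
Proof.
  intros Ht0 Ht. unfold gthth_t0, gthth_subst. destruct (Req_EM_T t 0) as [C | _]; [contradiction|].
  rewrite chi_eq by (split; [apply Rabs_pos_lt, Ht0 | exact Ht]).
  unfold chi_subst. rewrite Rabs_Rabsolu. ring.
Qed.

Lemma is_lim_gthth_t0 tau : 0 < tau -> is_lim (gthth_t0 a tau) 0 0.
Proof.
  intros Ht. apply is_lim_spec. intros eps.
  destruct (gthth_subst_continuous_0 tau Ht eps) as [d Hd].
  assert (Hm : 0 < Rmin d tau) by (apply Rmin_pos; [apply cond_pos | exact Ht]).
  exists (mkposreal _ Hm). intros t Htd Ht0.
  change (Rabs (t - 0) < Rmin d tau) in Htd. rewrite Rminus_0_r in Htd |- *.
  generalize (Rmin_l d tau) (Rmin_r d tau). intros.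
  rewrite gthth_t0_eq by (auto; lra).
  replace (gthth_subst tau t) with (gthth_subst tau t - gthth_subst tau 0)
    by (unfold gthth_subst at 2; destruct (Req_EM_T 0 0); [ring | congruence]).
  apply Hd; [rewrite Rminus_eq_0, Rabs_R0; apply cond_pos | rewrite Rminus_0_r; lra].
Qed.

Lemma g_thth_eq tau rho : rho_region tau rho -> g_thth a tau rho = gthth_subst tau (t0f a tau rho).
Proof.
  intros [Ht Hr]. destruct (t0f_spec tau rho Ht Hr) as [Hb _].
  unfold g_thth. destruct (Req_EM_T (t0f a tau rho) 0) as [-> | Hne].
  - rewrite (is_lim_unique _ _ _ (is_lim_gthth_t0 tau Ht)). unfold gthth_subst.
    destruct (Req_EM_T 0 0); [reflexivity | congruence].
  - apply gthth_t0_eq; [exact Hne | apply Rabs_def1; lra].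
Qed.

Lemma g_thth_continuous taus rhos : rho_region taus rhos ->
  continuity_2d_pt_on rho_region (g_thth a) taus rhos.
Proof.
  intros Hreg. destruct (t0f_spec taus rhos (proj1 Hreg) (proj2 Hreg)) as [Hb _].
  apply (continuity_2d_pt_on_ext _ (fun u v => gthth_subst u (t0f a u v))); [| exact Hreg |].
  - intros u v Huv. symmetry. apply g_thth_eq, Huv.
  - apply continuity_2d_pt_on_comp; [|apply t0f_continuous, Hreg].
    apply gthth_subst_continuous; [apply Hreg | apply Rabs_def1; lra].
Qed.

Lemma g_thth_rhoM tau : 0 < tau -> g_thth a tau (rhoM a tau) = 0.
Proof.
  intros Ht. unfold g_thth. rewrite t0f_rhoM by exact Ht.
  destruct (Req_EM_T 0 0) as [_ | C]; [|congruence].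
  rewrite (is_lim_unique _ _ _ (is_lim_gthth_t0 tau Ht)). reflexivity.
Qed.

End ScaleFactor.

Lemma rho_max_le a tau : rho_max a tau <= 2 * rhoM a tau.
Proof.
  unfold rho_max. set (E := fun rho => 0 < rho < 2 * rhoM a tau /\ g_tautau a tau rho = 0).
  generalize (Glb_Rbar_correct E). destruct (Glb_Rbar E) as [x | |]; intros [Hlb Hglb]; try lra.
  destruct (Rle_or_lt x (2 * rhoM a tau)) as [Hx | Hx]; [exact Hx | exfalso].
  assert (Hempty : is_lb_Rbar E (x + 1)).
  { intros r Hr. specialize (Hlb r Hr). simpl in Hlb. destruct Hr as [[_ Hr] _]. simpl. lra. }
  specialize (Hglb _ Hempty). simpl in Hglb. lra.
Qed.

Lemma D_polar_rho_region a c1 c2 tau rho theta phi :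
  D_polar a c1 c2 (tau, rho, theta, phi) -> rho_region a tau rho.
Proof.
  intros (Ht & Hr & _). generalize (rho_max_le a tau). unfold rho_region. lra.
Qed.

Lemma filterlim_within_continuity_2d_pt_on (D : R * R * R * R -> Prop) (P : R -> R -> Prop)
  (G : R -> R -> R) tau rho theta phi :
  (forall tau' rho' theta' phi', D (tau', rho', theta', phi') -> P tau' rho') ->
  continuity_2d_pt_on P G tau rho ->
  filterlim (fun q : R * R * R * R => let '(tau', rho', _, _) := q in G tau' rho')
    (within D (locally (tau, rho, theta, phi))) (locally (G tau rho)).
Proof.
  intros HDP HG. apply filterlim_locally. intros eps. destruct (HG eps) as [d Hd].
  exists d. intros [[[tau' rho'] theta'] phi'] [[[H1 H2] _] _] HD.
  apply Hd; [exact H1 | exact H2 | apply (HDP _ _ theta' phi'), HD].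
Qed.

Lemma filterlim_sin_sqr_theta (D : R * R * R * R -> Prop) (p : R * R * R * R) :
  filterlim (fun q : R * R * R * R => let '(_, _, theta, _) := q in sin theta ^ 2)
    (within D (locally p)) (locally (let '(_, _, theta, _) := p in sin theta ^ 2)).
Proof.
  apply (filterlim_filter_le_1 (F := locally p)); [apply filter_le_within|].
  destruct p as [[[tau rho] theta] phi].
  apply (filterlim_ext (fun q => sin (snd (fst q)) ^ 2)); [intros [[[? ?] ?] ?]; reflexivity|].
  apply (filterlim_comp _ _ _ (fun q : R * R * R * R => snd (fst q)) (fun th => sin th ^ 2) _
           (locally theta)).
  - apply (filterlim_comp _ _ _ fst snd _ (locally (tau, rho, theta)));
      [apply continuous_fst | apply continuous_snd].
  - apply (ex_derive_continuous (V := R_NormedModule)). auto_derive. exact I.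
Qed.

Theorem corollary7p4 (a : R -> R) :
  regular_scale_factor a ->
  even_fun a ->
  ((exists l, 0 < l /\ filterlim (Derive a) (at_right 0) (locally l)) \/
   (is_derive a 0 0 /\ exists n : nat, ex_derive_n a n 0 /\ Derive_n a n 0 <> 0)) ->
  (forall c1 c2 (p : R * R * R * R), D_polar a c1 c2 p ->
     filterlim (fun q : R * R * R * R => let '(tau, rho, _, _) := q in g_thth a tau rho)
       (within (D_polar a c1 c2) (locally p))
       (locally (let '(tau, rho, _, _) := p in g_thth a tau rho)) /\
     filterlim (fun q : R * R * R * R => let '(tau, rho, theta, _) := q in g_phph a tau rho theta)
       (within (D_polar a c1 c2) (locally p))
       (locally (let '(tau, rho, theta, _) := p in g_phph a tau rho theta))) /\
  (forall tau, 0 < tau ->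
     is_lim (gthth_t0 a tau) 0 0 /\
     g_thth a tau (rhoM a tau) = 0 /\
     (forall theta, g_phph a tau (rhoM a tau) theta = 0)).
Proof.
  intros Ha He _. split.
  - intros c1 c2 [[[tau rho] theta] phi] HD.
    assert (Hthth := filterlim_within_continuity_2d_pt_on (D_polar a c1 c2) (rho_region a)
      (g_thth a) tau rho theta phi (D_polar_rho_region a c1 c2)
      (g_thth_continuous a Ha He tau rho (D_polar_rho_region a c1 c2 tau rho theta phi HD))).
    split; [exact Hthth|].
    apply (filterlim_ext (fun q => (let '(tau, rho, _, _) := q in g_thth a tau rho) *
                                   (let '(_, _, theta, _) := q in sin theta ^ 2)));
      [intros [[[? ?] ?] ?]; reflexivity|].
    apply (filterlim_comp_2 _ _ Rmult Hthth (filterlim_sin_sqr_theta _ (tau, rho, theta, phi))).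
    apply (filterlim_mult (K := R_AbsRing)).
  - intros tau Ht. split; [apply is_lim_gthth_t0; assumption|].
    split; [apply g_thth_rhoM; assumption|].
    intros theta. unfold g_phph. rewrite g_thth_rhoM by assumption. ring.
Qed.
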